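(* Let $q$ be a prime power and $k\ge3$, $u\ge2$, $h\ge1$ integers. Let $U_1,\dots,U_h$ be $u$-dimensional subspaces of $\mathbf F_q^k$ with $U_i\cap U_j=\{0\}$ for $i\ne j$, and assume $q^k-q^{k-1}>h(q^u-1)$. Let $U$ be the set of nonzero vectors of $\mathbf F_q^k$ not in $U_1\cup\dots\cup U_h$, let $\widetilde G$ be a matrix whose columns consist of exactly one representative of each class $\{\lambda\mathbf v:\lambda\in\mathbf F_q^*\}$, $\mathbf v\in U$, and let $\mathbf C$ be the linear code with generator matrix $\widetilde G$. Suppose $\mathbf C$ has parameters $\big[\frac{(q^k-1)-h(q^u-1)}{q-1},k,d=q^{k-1}-hq^{u-1}\big]_q$. If $i_h+u>\sum_{i=1}^{k-u}\lfloor h/q^i\rfloor$, then $\mathbf C$ is distance optimal.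
   Context: For a positive integer $h$ with $q$-adic expansion $h=h_{m-1}q^{m-1}+\dots+h_0$ ($0\le h_i<q$), $i_h$ denotes the least index $i\ge0$ with $h_i>0$. A linear $[n,k,d]_q$ code is distance optimal if no linear $[n,k,d+1]_q$ code exists. *)

From HB Require Import structures.
From mathcomp Require Import all_boot all_order all_algebra.
Set Implicit Arguments. Unset Strict Implicit. Unset Printing Implicit Defensive.
Import GRing.Theory.
Local Open Scope ring_scope.

Definition wt (F : fieldType) (n : nat) (v : 'rV[F]_n) : nat :=
  #|[set j : 'I_n | v ord0 j != 0]|.

Definition has_min_dist (F : fieldType) (n : nat) (C : {vspace 'rV[F]_n}) (d : nat) : Prop :=
  (exists c : 'rV[F]_n, [/\ c \in C, c != 0 & wt c = d]) /\
  (forall c : 'rV[F]_n, c \in C -> c != 0 -> (d <= wt c)%N).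

Definition is_code_nkd (F : fieldType) (n : nat) (C : {vspace 'rV[F]_n}) (k d : nat) : Prop :=
  \dim C = k /\ has_min_dist C d.

Definition distance_optimal (F : fieldType) (n k d : nat) : Prop :=
  ~ exists C : {vspace 'rV[F]_n}, is_code_nkd C k d.+1.

Definition gen_code (F : fieldType) (k n : nat) (G : 'M[F]_(k, n)) : {vspace 'rV[F]_n} :=
  <<[seq row i G | i <- enum 'I_k]>>%VS.

From mathcomp Require Import all_boot all_order all_algebra.
From mathcomp Require Import zify.

Set Implicit Arguments.
Unset Strict Implicit.
Unset Printing Implicit Defensive.

Import GRing.Theory.

(* By the Griesmer bound, a linear [n, k, d + 1]_q code has length at least
   sum_(i < k) ceil((d + 1) / q^i).  For d = q^(k-1) - h q^(u-1) each term equals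
   q^(k-1-i) - floor(h q^(u-1) / q^i) + [q^i | h q^(u-1)], so the bound exceeds
   n = (q^k - 1)/(q - 1) - h (q^u - 1)/(q - 1) by the number of i < k with
   q^i | h q^(u-1), which is at least i_h + u, minus sum_(1 <= i <= k-u) floor(h / q^i).
   The hypothesis makes this difference positive. *)

Definition ceildiv (d m : nat) : nat := (d + m.-1) %/ m.

Lemma leq_ceildivLR d m a : 0 < m -> (ceildiv d m <= a) = (d <= a * m).
Proof. by move=> m_gt0; rewrite /ceildiv -ltnS ltn_divLR //; apply/idP/idP; nia. Qed.

Lemma ceildiv1 d : ceildiv d 1 = d.
Proof. by rewrite /ceildiv addn0 divn1. Qed.

Lemma ceildivMr d q m : 0 < q -> 0 < m -> ceildiv (ceildiv d q) m = ceildiv d (q * m).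
Proof.
move=> q_gt0 m_gt0; have qm_gt0 : 0 < q * m by rewrite muln_gt0 q_gt0.
apply/eqP; rewrite eqn_leq !leq_ceildivLR //; apply/andP; split.
  by rewrite -mulnA [m * q]mulnC -leq_ceildivLR.
by rewrite [q * m]mulnC mulnA -!leq_ceildivLR.
Qed.

Lemma ceildiv_complement m t H : 0 < m -> H <= m * t ->
  ceildiv (m * t - H).+1 m + H %/ m = t + (m %| H).
Proof.
move=> m_gt0 H_le; rewrite /ceildiv addSn -addnS (prednK m_gt0) /dvdn.
have r_lt := ltn_pmod H m_gt0; have H_eq := divn_eq H m.
move: (H %/ m) (H %% m) H_eq r_lt => a r H_eq r_lt; subst H.
have a_le : a <= t by move: H_le; nia.
have [-> | r_gt0] := posnP r.
  have -> : m * t - (a * m + 0) + m = (t - a).+1 * m by nia.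
  rewrite mulnK //; lia.
have -> : m * t - (a * m + r) + m = (t - a) * m + (m - r) by nia.
rewrite divnMDl // divn_small; lia.
Qed.

Definition griesmer_sum (q k d : nat) : nat := \sum_(i < k) ceildiv d (q ^ i).

Lemma griesmer_sumS q k d : 0 < q ->
  griesmer_sum q k.+1 d = d + griesmer_sum q k (ceildiv d q).
Proof.
move=> q_gt0; rewrite /griesmer_sum big_ord_recl expn0 ceildiv1; congr (_ + _).
by apply: eq_bigr => i _; rewrite expnS ceildivMr ?expn_gt0 ?q_gt0.
Qed.

Lemma leq_griesmer_sum q k d d' : d <= d' -> griesmer_sum q k d <= griesmer_sum q k d'.
Proof. by move=> le_dd'; apply: leq_sum => i _; rewrite leq_div2r ?leq_add2r. Qed.

Lemma griesmer_sum_complement q K H : 0 < q -> H <= q ^ K ->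
  griesmer_sum q K.+1 (q ^ K - H).+1 + \sum_(i < K.+1) H %/ q ^ i =
  \sum_(i < K.+1) q ^ i + \sum_(i < K.+1) (q ^ i %| H).
Proof.
move=> q_gt0 H_le; rewrite [\sum_(i < K.+1) q ^ i](reindex_inj rev_ord_inj).
rewrite /griesmer_sum -!big_split; apply: eq_bigr => i _ /=; rewrite subSS.
have qK : q ^ K = q ^ i * q ^ (K - i) by rewrite -expnD subnKC // -ltnS.
by rewrite qK ceildiv_complement ?expn_gt0 ?q_gt0 // -qK.
Qed.

Lemma sum_divn_mul_exp q K U h : 0 < q -> U <= K ->
  \sum_(i < K.+1) (h * q ^ U) %/ q ^ i =
  h * \sum_(i < U.+1) q ^ i + \sum_(1 <= i < (K - U).+1) h %/ q ^ i.
Proof.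
move=> q_gt0 U_le; rewrite -(big_mkord xpredT (fun i => h * q ^ U %/ q ^ i)).
rewrite (big_cat_nat _ (n := U.+1)) //=; congr (_ + _).
  rewrite big_mkord (reindex_inj rev_ord_inj) big_distrr; apply: eq_bigr => i _ /=.
  have qU : q ^ U = q ^ i * q ^ (U - i) by rewrite -expnD subnKC // -ltnS.
  by rewrite subSS qU mulnA mulnK // expn_gt0 q_gt0.
rewrite -{1}[U.+1]add1n big_addn subSn //; apply: eq_bigr => i _.
by rewrite expnD divnMr // expn_gt0 q_gt0.
Qed.

Lemma count_dvdn_exp q K U h e : q ^ e %| h -> U + e <= K ->
  U.+1 + e <= \sum_(i < K.+1) (q ^ i %| h * q ^ U).
Proof.
move=> dvd_h le_K; rewrite -(big_mkord xpredT (fun i => (q ^ i %| h * q ^ U) : nat)).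
rewrite (big_cat_nat _ (n := U.+1 + e)) //=.
apply: leq_trans (leq_addr _ _); rewrite -[X in X <= _]muln1 -[X in X * 1]subn0.
rewrite -sum_nat_const_nat big_nat_cond [X in _ <= X]big_nat_cond.
apply: leq_sum => i /andP [/andP [_ i_lt] _]; rewrite lt0b.
apply: dvdn_trans (_ : q ^ (e + U) %| _); first by rewrite dvdn_exp2l // addnC -ltnS.
by rewrite expnD dvdn_mul.
Qed.

Lemma ltn_mul_exp_from_diff q a b h : 0 < q ->
  h * (q ^ a.+1 - 1) < q ^ b.+1 - q ^ b -> h * q ^ a < q ^ b.
Proof.
move=> q_gt0 lt_h.
have le_h : q.-1 * (h * q ^ a) <= h * (q ^ a.+1 - 1).
  by rewrite mulnCA leq_mul2l -subn1 mulnBl mul1n -expnS leq_sub2l ?expn_gt0 ?q_gt0 ?orbT.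
move: (leq_ltn_trans le_h lt_h); rewrite expnS -{2}[q ^ b]mul1n -mulnBl subn1.
by rewrite ltn_mul2l => /andP [].
Qed.

Lemma length_lt_griesmer_sum q k u h e : 1 < q -> 0 < u ->
  q ^ e %| h -> q ^ e <= h -> h * (q ^ u - 1) < q ^ k - q ^ k.-1 ->
  \sum_(1 <= i < (k - u).+1) h %/ q ^ i < e + u ->
  (q ^ k - 1 - h * (q ^ u - 1)) %/ (q - 1) <
    griesmer_sum q k (q ^ k.-1 - h * q ^ u.-1).+1.
Proof.
move=> q_gt1 u_gt0 dvd_h le_h lt_h lt_S; have q_gt0 := ltnW q_gt1.
case: k lt_h lt_S => [|K]; first by rewrite subnn.
case: u u_gt0 => // U _ /= lt_h; rewrite subSS => lt_S /=.
have lt_K := ltn_mul_exp_from_diff q_gt0 lt_h.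
have le_UeK : U + e <= K.
  suff: q ^ (e + U) < q ^ K by rewrite ltn_exp2l // addnC => /ltnW.
  by rewrite expnD; apply: leq_ltn_trans lt_K; rewrite leq_mul2r le_h orbT.
have sum_eq := griesmer_sum_complement q_gt0 (ltnW lt_K).
rewrite sum_divn_mul_exp // in sum_eq; last exact: leq_trans (leq_addr e U) le_UeK.
have count_ge := count_dvdn_exp dvd_h le_UeK.
have g_gt0 : 0 < griesmer_sum q K.+1 (q ^ K - h * q ^ U).+1 by rewrite griesmer_sumS.
rewrite !subn1 !predn_exp mulnCA -mulnBr mulKn; last by rewrite -subn1 subn_gt0.
(* the Griesmer sum is [A - h B + (c - S)] with [c > S] *)
move: g_gt0 sum_eq count_ge lt_S; rewrite addSn.
move: (griesmer_sum _ _ _) (h * \sum_(i < U.+1) q ^ i) => g hB.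
move: (\sum_(1 <= i < _) _) (\sum_(i < K.+1) q ^ i) (\sum_(i < K.+1) (q ^ i %| _)) => S A c.
lia.
Qed.

Lemma dvdn_exp_digits q h e : 0 < q ->
  (forall i, i < e -> (h %/ q ^ i) %% q = 0) -> q ^ e %| h.
Proof.
move=> q_gt0; elim: e => [|e IH] digits0; first by rewrite dvd1n.
have dvd_e : q ^ e %| h by apply: IH => i lt_ie; apply: digits0; apply: ltnW.
by rewrite -(divnK dvd_e) expnS dvdn_pmul2r ?expn_gt0 ?q_gt0 // /dvdn digits0.
Qed.

Lemma card_fiber_ge (I T : finType) (S : {set I}) (r : I -> T) : 0 < #|T| ->
  exists a, #|S| <= #|T| * #|[set j in S | r j == a]|.
Proof.
move=> T_gt0; pose fiber a := #|[set j in S | r j == a]|.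
have S_eq : #|S| = \sum_a fiber a.
  rewrite -sum1_card (partition_big r predT) //=; apply: eq_bigr => a _.
  by rewrite /fiber -sum1_card; apply: eq_bigl => j; rewrite inE.
have [a _ fiber_max] := @eq_bigmax_cond T predT fiber T_gt0.
exists a; rewrite S_eq -/(fiber a) -fiber_max -sum_nat_const; apply: leq_sum => b _.
exact: (@leq_bigmax_cond T predT fiber).
Qed.

Local Open Scope ring_scope.

(* Residual codes are modelled by zeroing coordinates instead of deleting them,
   so all codes keep length n; the set T of [griesmer_supported] carries the
   actual length. *)
Section Puncture.
Variables (F : fieldType) (n : nat).

Definition supp (v : 'rV[F]_n) : {set 'I_n} := [set j | v ord0 j != 0].

Definition puncture (S : {set 'I_n}) : 'End('rV[F]_n) :=
  linfun (mulmxr (diag_mx (\row_j (j \notin S)%:R))).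

Lemma puncture_coord S x j : puncture S x ord0 j = if j \in S then 0 else x ord0 j.
Proof. by rewrite lfunE /= mul_mx_diag !mxE; case: ifP; rewrite ?mulr0 ?mulr1. Qed.

Lemma wtE v : wt v = #|supp v|.
Proof. by []. Qed.

Lemma supp_eq0 v : (supp v == set0) = (v == 0).
Proof.
apply/eqP/eqP => [supp0 | ->]; last by apply/setP => j; rewrite !inE mxE eqxx.
apply/rowP => j; rewrite mxE; apply/eqP/negPn/negP => vj_neq0.
by move: (in_set0 j); rewrite -supp0 inE vj_neq0.
Qed.

Lemma puncture_supp v : puncture (supp v) v = 0.
Proof.
apply/rowP => j; rewrite puncture_coord mxE.
by case: ifPn => //; rewrite inE negbK => /eqP.
Qed.

End Puncture.

Arguments puncture {F n} S.

Section MinimumWeightWord.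
Variables (F : finFieldType) (n : nat) (C : {vspace 'rV[F]_n}) (c : 'rV[F]_n).
Hypotheses (cC : c \in C) (c_neq0 : c != 0)
  (c_min : forall x, x \in C -> x != 0 -> (wt c <= wt x)%N).

Lemma puncture_supp_ker x : x \in C -> puncture (supp c) x = 0 -> x \in <[c]>%VS.
Proof.
move=> xC px0; have [j0 j0_supp] : exists j0, j0 \in supp c.
  by apply/set0Pn; rewrite supp_eq0.
have cj0_neq0 : c ord0 j0 != 0 by rewrite inE in j0_supp.
have x_out j : j \notin supp c -> x ord0 j = 0.
  by move=> j_out; move/rowP/(_ j): px0; rewrite puncture_coord (negbTE j_out) mxE.
set a := x ord0 j0 / c ord0 j0; apply/vlineP; exists a; apply/eqP; rewrite -subr_eq0.
apply: contraT => z_neq0; suff : (wt (x - a *: c) < wt c)%N.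
  by rewrite ltnNge c_min ?memvB ?memvZ.
rewrite !wtE (cardsD1 j0 (supp c)) j0_supp add1n ltnS.
apply: subset_leq_card; apply/subsetP => j; rewrite !inE !mxE.
have [-> | _] := eqVneq j j0; first by rewrite /a divfK ?subrr ?eqxx.
case: (boolP (j \in supp c)) => [|j_out]; first by rewrite inE.
by rewrite x_out //; move: j_out; rewrite inE negbK => /eqP ->; rewrite mulr0 subrr eqxx.
Qed.

Lemma dim_puncture_supp : (\dim C <= (\dim (puncture (supp c) @: C)).+1)%N.
Proof.
rewrite -(limg_ker_dim (puncture (supp c)) C) addnC -[(\dim (_ @: C)).+1]addn1 leq_add2l.
apply: leq_trans (dimvS (_ : C :&: lker _ <= <[c]>)%VS) _; last by rewrite dim_vline leq_b1.
by apply/subvP => x /memv_capP [xC]; rewrite memv_ker => /eqP; apply: puncture_supp_ker.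
Qed.

Lemma wt_puncture_supp x : x \in C -> puncture (supp c) x != 0 ->
  (ceildiv (wt c) #|F| <= wt (puncture (supp c) x))%N.
Proof.
move=> xC px_neq0; have q_gt0 : (0 < #|F|)%N by apply/card_gt0P; exists 0.
(* some ratio a = x_j / c_j is shared by wt c / q coordinates of supp c, on which
   x - a c vanishes *)
have [a fiber_ge] := card_fiber_ge (supp c) (fun j => x ord0 j / c ord0 j) q_gt0.
set A := [set j in supp c | _] in fiber_ge.
have A_sub : A \subset supp c by apply/subsetP => j; rewrite inE => /andP [].
have z_neq0 : x - a *: c != 0.
  apply: contraNneq px_neq0 => z0.
  by rewrite -[x](subrK (a *: c)) z0 add0r linearZ /= puncture_supp scaler0.
have wt_z_le : (wt (x - a *: c) <= wt (puncture (supp c) x) + #|supp c :\: A|)%N.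
  rewrite wtE; apply: leq_trans (leq_card_setU _ _); apply: subset_leq_card.
  apply/subsetP => j; rewrite !inE !mxE puncture_coord.
  case: ifPn => [j_supp | ]; last by rewrite inE negbK => /eqP ->; rewrite mulr0 subr0 => ->.
  rewrite inE in j_supp; rewrite eqxx j_supp andbT /=; apply: contra => /eqP <-.
  by rewrite divfK ?subrr.
have c_le_z := c_min (memvB xC (memvZ _ cC)) z_neq0.
rewrite leq_ceildivLR // mulnC; apply: leq_trans fiber_ge _.
rewrite leq_mul2l; apply/orP; right.
move: c_le_z wt_z_le (subset_leq_card A_sub); rewrite cardsD (setIidPr A_sub) -wtE.
move: (wt c) (wt _) (wt _) #|A|; lia.
Qed.

End MinimumWeightWord.

Lemma exists_min_wt (F : finFieldType) n (C : {vspace 'rV[F]_n}) : C != 0%VS ->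
  exists c, [/\ c \in C, c != 0 & forall x, x \in C -> x != 0 -> (wt c <= wt x)%N].
Proof.
move=> C_neq0; have pick_ok : (vpick C \in C) && (vpick C != 0) by rewrite memv_pick vpick0.
case: (@arg_minnP _ _ [pred v | (v \in C) && (v != 0)] (@wt F n) pick_ok).
move=> c /andP [cC c_neq0] c_min.
by exists c; split=> // x xC x_neq0; apply: c_min; rewrite inE xC.
Qed.

Lemma griesmer_supported (F : finFieldType) n k (T : {set 'I_n}) (C : {vspace 'rV[F]_n}) d :
  (k <= \dim C)%N -> (forall x, x \in C -> forall j, j \notin T -> x ord0 j = 0) ->
  (forall x, x \in C -> x != 0 -> (d <= wt x)%N) ->
  (griesmer_sum #|F| k d <= #|T|)%N.
Proof.
elim: k T C d => [|k IH] T C d le_k C_T d_le; first by rewrite /griesmer_sum big_ord0.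
have q_gt0 : (0 < #|F|)%N by apply/card_gt0P; exists 0.
have C_neq0 : C != 0%VS by rewrite -dimv_eq0 -lt0n (leq_trans _ le_k).
have [c [cC c_neq0 c_min]] := exists_min_wt C_neq0.
have supp_T : supp c \subset T.
  by apply/subsetP => j; apply: contraTT => j_out; rewrite inE negbK C_T.
apply: leq_trans (leq_griesmer_sum _ _ (d_le c cC c_neq0)) _; rewrite griesmer_sumS //.
rewrite -(cardsID (supp c) T) (setIidPr supp_T) -wtE leq_add2l.
apply: (IH _ (puncture (supp c) @: C)%VS).
- by rewrite -ltnS (leq_trans le_k) // dim_puncture_supp.
- move=> _ /memv_imgP [x xC ->] j; rewrite inE negb_and negbK puncture_coord.
  by case: ifP => //= _ /C_T ->.
- move=> _ /memv_imgP [x xC ->] px_neq0.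
  exact (wt_puncture_supp cC c_neq0 c_min xC px_neq0).
Qed.

Lemma griesmer_bound (F : finFieldType) n (C : {vspace 'rV[F]_n}) k d :
  is_code_nkd C k d -> (griesmer_sum #|F| k d <= n)%N.
Proof.
case=> dimC [_ d_min]; rewrite -[n in (_ <= n)%N]card_ord -[#|'I_n|]cardsT.
apply: griesmer_supported d_min; first by rewrite dimC.
by move=> x _ j; rewrite inE.
Qed.

Theorem theorem2p3 (F : finFieldType) (k u h ih n : nat)
  (Us : 'I_h -> {vspace 'rV[F]_k}) (G : 'M[F]_(k, n)) :
  (3 <= k)%N -> (2 <= u)%N -> (1 <= h)%N ->
  (forall i, \dim (Us i) = u) ->
  (forall i j, i != j -> (Us i :&: Us j)%VS = 0%VS) ->
  (h * (#|F| ^ u - 1) < #|F| ^ k - #|F| ^ k.-1)%N ->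
  n = ((#|F| ^ k - 1 - h * (#|F| ^ u - 1)) %/ (#|F| - 1))%N ->
  (* every column of G lies in U = F^k \ (U_1 u ... u U_h u {0}) *)
  (forall j : 'I_n, (col j G)^T != 0 /\ (forall i, (col j G)^T \notin Us i)) ->
  (* each projective class of U has exactly one representative among the columns *)
  (forall v : 'rV[F]_k, v != 0 -> (forall i, v \notin Us i) ->
     exists! j : 'I_n, exists2 a : F, a != 0 & (col j G)^T = a *: v) ->
  (* C has parameters [n, k, q^(k-1) - h q^(u-1)] *)
  is_code_nkd (gen_code G) k (#|F| ^ k.-1 - h * #|F| ^ u.-1)%N ->
  (* i_h is the least index of a nonzero q-adic digit of h *)
  ((h %/ #|F| ^ ih) %% #|F| != 0)%N ->
  (forall i, (i < ih)%N -> ((h %/ #|F| ^ i) %% #|F| = 0)%N) ->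
  (\sum_(1 <= i < (k - u).+1) h %/ #|F| ^ i < ih + u)%N ->
  distance_optimal F n k (#|F| ^ k.-1 - h * #|F| ^ u.-1)%N.
Proof.
(* only the length n and the parameters of C matter, through the Griesmer bound *)
move=> _ u_ge2 _ _ _ lt_h n_eq _ _ _ digit_ih digits_lt lt_S [C /griesmer_bound].
rewrite n_eq; apply/negP; rewrite -ltnNge; have q_gt1 := card_finNzRing_gt1 F.
have q_gt0 := ltnW q_gt1.
apply: length_lt_griesmer_sum lt_h lt_S => //; first exact: ltnW.
- exact: dvdn_exp_digits q_gt0 digits_lt.
- rewrite -[X in (X <= _)%N]mul1n -leq_divRL ?expn_gt0 ?q_gt0 // lt0n.
  by move: digit_ih; apply: contra_neq => ->; rewrite mod0n.
Qed.
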